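(* Let $\ell_1,\dots,\ell_T\in\mathbb{R}^{n+1}$ be the observed loss vectors (with $\ell_t\in\partial\varphi_t(w_t)$ for proper losses $\varphi_t$ on $\mathbb{R}^{n+1}$ with $\Delta^n\subseteq\operatorname{dom}\partial\varphi_t$), $\widehat{\ell}_t\in\mathbb{R}^{n+1}$ arbitrary predictions, $a\in\Delta^n$, and $\mathrm{Regret}(u,\dots,u)=\sum_{t=1}^T\varphi_t(w_t)-\sum_{t=1}^T\varphi_t(u)$. For $u\in\Delta^n$: (i) If $\eta_1\geqslant\dots\geqslant\eta_{T+1}>0$ and the learner plays $\widetilde{w}_t=\mathscr{N}\big(a\circ e^{-\eta_t\sum_{i=1}^{t-1}\ell_i}\big)$, $w_t=\mathscr{N}\big(\widetilde{w}_t\circ e^{-\eta_t\widehat{\ell}_t}\big)$, then \[\mathrm{Regret}(u,\dots,u)\leqslant\frac{1}{\eta_{T+1}}\Big\langle u,\ln\frac ua\Big\rangle+\sum_{t=1}^T\frac{1}{\eta_t}Q_2^\star\big(\eta_t\lVert\ell_t-\widehat{\ell}_t\rVert_\infty\big)-\sum_{t=1}^T\frac1{\eta_t}\Big\langle w_t,\ln\frac{w_t}{\widetilde{w}_t}\Big\rangle,\] and also \[\mathrm{Regret}(u,\dots,u)\leqslant\frac{1}{\eta_{T+1}}\Big\langle u,\ln\frac ua\Big\rangle+\sum_{t=1}^T\frac{1}{\eta_t}\Phi_{\eta_t}\big(\ell_t,\widehat{\ell}_t\big)-\sum_{t=1}^T\frac1{\eta_t}\Big\langle v_t,\ln\frac{v_t}{\widetilde{w}_t}\Big\rangle,\quad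 v_t=\mathscr{N}\big(\widetilde{w}_t\circ e^{-\eta_t\widehat{\ell}'_t}\big).\] (ii) If $0<\theta_1\leqslant\dots\leqslant\theta_T$ and the learner plays $\widetilde{w}_1=a$, $\widetilde{w}_t=\mathscr{N}\big(\widetilde{w}_{t-1}\circ e^{-\theta_{t-1}\ell_{t-1}}\big)$, $w_t=\mathscr{N}\big(\widetilde{w}_t\circ e^{-\theta_t\widehat{\ell}_t}\big)$, then \[\mathrm{Regret}(u,\dots,u)\leqslant\frac{1}{\theta_1}\Big\langle u,\ln\frac ua\Big\rangle+\sum_{t=1}^T\frac{1}{\theta_t}Q_2^\star\big(\theta_t\lVert\ell_t-\widehat{\ell}_t\rVert_\infty\big)-\sum_{t=1}^T\frac1{\theta_t}\Big\langle w_t,\ln\frac{w_t}{\widetilde{w}_t}\Big\rangle,\] and also \[\mathrm{Regret}(u,\dots,u)\leqslant\frac{1}{\theta_1}\Big\langle u,\ln\frac ua\Big\rangle+\sum_{t=1}^T\frac{1}{\theta_t}\Phi_{\theta_t}\big(\ell_t,\widehat{\ell}_t\big)-\sum_{t=1}^T\frac1{\theta_t}\Big\langle v_t,\ln\frac{v_t}{\widetilde{w}_t}\Big\rangle,\quad v_t=\mathscr{N}\big(\widetilde{w}_t\circ e^{-\theta_t\widehat{\ell}'_t}\big).\]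
   Context: $\Delta^n=\{w\in\mathbb{R}^{n+1}:w\geqslant0,\sum_iw_i=1\}$; $\circ$ is the entrywise product, exponentials/logarithms/ratios are entrywise; $\mathscr{N}(v)=v/\sum_iv_i$; $\langle u,\ln\frac ua\rangle=\sum_iu_i\ln\frac{u_i}{a_i}$ with $0\ln(0/\cdot)=0$ (and $+\infty$ if $u_i>0=a_i$). $Q_\rho^\star(\varkappa)=\frac12\varkappa^2-\frac12(\lvert\varkappa\rvert-\rho)_+^2$ with $x_+=\max\{x,0\}$. $\widehat{\ell}'_t=\lambda\widehat{\ell}_t+(1-\lambda)\ell_t$ with $\lambda=\min\{\lVert\ell_t\rVert_\infty/\lVert\ell_t-\widehat{\ell}_t\rVert_\infty,1\}$ (any $\lambda$ if $\ell_t=\widehat{\ell}_t$). For $\xi>0$ and $\rho=2$, $\Phi_\xi(x^*,\widehat{x}^* )=Q_\rho^\star\big(\xi\min\{\lVert x^*-\widehat{x}^*\rVert_\infty,\lVert x^*\rVert_\infty\}\big)+\xi\lVert x^*\rVert_\infty\min\{\xi(\lVert x^*-\widehat{x}^*\rVert_\infty-\lVert x^*\rVert_\infty)_+,\rho\}$. Subdifferential of a proper function: usual convex-analysis subdifferential. *)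

From HB Require Import structures.
From mathcomp Require Import all_boot all_order all_algebra.
From mathcomp Require Import all_classical all_reals all_analysis.
Set Implicit Arguments. Unset Strict Implicit. Unset Printing Implicit Defensive.
Import Order.TTheory GRing.Theory Num.Theory.
Local Open Scope ring_scope.

Section Defs.
Variable R : realType.
Variable n : nat.

Definition vec := 'I_n.+1 -> R.

Definition simplex (w : vec) : Prop := (forall i, 0 <= w i) /\ \sum_i w i = 1.

Definition normalize (v : vec) : vec := fun i => v i / \sum_j v j.

Definition dotv (x y : vec) : R := \sum_i x i * y i.

Definition vsub (x y : vec) : vec := fun i => x i - y i.

Definition supnorm (v : vec) : R := \big[Num.max/0]_i `|v i|.

(* <u, ln (u/a)> with 0 ln (0/.) = 0 and +oo if u_i > 0 = a_i *)
Definition kl (u a : vec) : \bar R :=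
  (\sum_i (if u i == 0%R then 0%E
           else if a i == 0%R then +oo%E
           else ((u i * ln (u i / a i))%R)%:E))%E.

Definition Qstar (rho k : R) : R :=
  k ^+ 2 / 2 - (Num.max (`|k| - rho) 0) ^+ 2 / 2.

Definition Phix (xi : R) (x xh : vec) : R :=
  Qstar 2 (xi * Num.min (supnorm (vsub x xh)) (supnorm x))
  + xi * supnorm x *
    Num.min (xi * Num.max (supnorm (vsub x xh) - supnorm x) 0) 2.

(* lhat'_t = lambda lhat_t + (1 - lambda) l_t,
   lambda = min(||l||/||l - lhat||, 1)  (when l = lhat, any lambda gives l) *)
Definition lhat' (l lh : vec) : vec :=
  let lam := Num.min (supnorm l / supnorm (vsub l lh)) 1 in
  fun i => lam * lh i + (1 - lam) * l i.

Definition proper_fun (f : vec -> \bar R) : Prop :=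
  (forall x, f x != -oo%E) /\ exists x, f x != +oo%E.

Definition subgrad (f : vec -> \bar R) (w g : vec) : Prop :=
  f w \is a fin_num /\
  forall x, (f w + (dotv g (vsub x w))%:E <= f x)%E.

Definition expstep (wt : vec) (eta : R) (v : vec) : vec :=
  normalize (fun i => wt i * expR (- (eta * v i))).

Definition ftrl_tilde (a : vec) (eta : nat -> R) (l : nat -> vec) (t : nat) : vec :=
  normalize (fun i => a i * expR (- (eta t * \sum_(1 <= s < t) l s i))).

Fixpoint omd_tilde (a : vec) (theta : nat -> R) (l : nat -> vec) (t : nat) : vec :=
  match t with
  | 0 => a
  | s.+1 => if s == 0%N then a else expstep (omd_tilde a theta l s) (theta s) (l s)
  end.

Definition regret (T : nat) (phi : nat -> vec -> \bar R) (w : nat -> vec) (u : vec)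
  : \bar R :=
  (\sum_(1 <= t < T.+1) phi t (w t) - \sum_(1 <= t < T.+1) phi t u)%E.

End Defs.

From HB Require Import structures.
From mathcomp Require Import all_boot all_order all_algebra.
From mathcomp Require Import all_classical all_reals all_analysis.
From mathcomp Require Import ring lra.
Import Order.TTheory GRing.Theory Num.Theory numFieldNormedType.Exports.
Set Implicit Arguments. Unset Strict Implicit. Unset Printing Implicit Defensive.
Local Open Scope ring_scope.

(* Both learners are exponential-weights updates [p |-> N(p o e^(-eta x))].  For
   [q << p] the update satisfies the Gibbs identity
     [KL(q || N(p o e^(-eta x))) = KL(q || p) + eta <x, q> - eta m_p(eta, x)],
   where [m] is the mix loss [-(1/eta) ln <p, e^(-eta x)>].  Convexity bounds the
   regret by [sum_t <l_t, w_t - u>], which splits into the mixability gaps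
   [<l_t, w_t> - m_t] and [sum_t (m_t - <l_t, u>)].
   - The second sum is at most [KL(u || a) / eta]: for (ii) the Gibbs identity makes
     it an Abel sum of [KL(u || w~_t)]; for (i) [m_t] is an increment of the mix loss
     of the cumulative loss, which is nonincreasing in [eta].
   - For a gap, with [w = N(w~ o e^(-eta lh))] and [q = N(w~ o e^(-eta l))], the
     Gibbs identity turns [eta gap + KL(w || w~)] into [KL(w || q)]; the symmetric
     identity, Hoelder and Pinsker bound it by [eta s r - r^2/2 <= Q*_2(eta s)], with
     [s = |l - lh|_oo] and [r = |w - q|_1 <= 2].  The [Phi] bound runs the same
     argument for [lh'] and pays [eta |l|_oo |w - v|_1] for switching to [v]. *)

Section ScalarInequalities.
Variable R : realType.

(* [x ln x - (x - 1) - 3 (x - 1)^2 / (2 (x + 2)) = x (g x - g 1)], and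
   [g' x = (x - 1)^3 / (x^2 (x + 2)^2)] changes sign only at [1]. *)
Let g (x : R) : R := ln x + 4^-1 * x^-1 + 27/4 * (x + 2)^-1.

Let is_derive_g (x : R) : 0 < x ->
  is_derive x 1 g ((x - 1) ^+ 3 / (x ^+ 2 * (x + 2) ^+ 2)).
Proof.
move=> x0; have x2 : 0 < x + 2 by rewrite addr_gt0.
have dinv : is_derive x 1 (fun z : R => z^-1) (- x ^- 2 *: 1).
  by apply: is_deriveV; rewrite gt_eqF.
have dinv2 : is_derive x 1 (fun z : R => (z + 2)^-1) (- (x + 2) ^- 2 *: 1).
  by apply: (@is_deriveV _ (shift 2)); [rewrite gt_eqF | exact: is_derive_shift].
apply: is_derive_eq (is_deriveD (is_deriveD (is_derive1_ln x0)
  (is_deriveZ (4^-1 : R) dinv)) (is_deriveZ (27/4 : R) dinv2)) _.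
by rewrite /GRing.scale /=; field; rewrite !gt_eqF.
Qed.

Let g_ge1 (x : R) : 0 < x -> g 1 <= g x.
Proof.
move=> x0.
have dg (z : R) : 0 < z -> derivable g z 1 by move/is_derive_g => [].
have g'E (z : R) : 0 < z -> derive1 g z = (z - 1) ^+ 3 / (z ^+ 2 * (z + 2) ^+ 2).
  by move/is_derive_g => d; rewrite derive1E derive_val.
have cg (z : R) : 0 < z -> {for z, continuous g}.
  by move/dg => d; apply/differentiable_continuous/derivable1_diffP.
have den_ge0 (z : R) : 0 <= z ^+ 2 * (z + 2) ^+ 2 by rewrite mulr_ge0 ?sqr_ge0.
have [x1|x1] := lerP 1 x.
- apply: (@ger0_derive1_le_cc _ g 1 x); rewrite ?in_itv/= ?lexx ?x1 //.
  + by move=> z; rewrite in_itv/= => /andP[z1 _]; apply: dg (lt_trans ltr01 z1).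
  + move=> z; rewrite in_itv/= => /andP[z1 _]; rewrite g'E ?(lt_trans ltr01 z1) //.
    by rewrite divr_ge0 // exprn_ge0 // subr_ge0 ltW.
  + apply: continuous_in_subspaceT => z; rewrite inE/= in_itv/= => /andP[z1 _].
    exact: cg (lt_le_trans ltr01 z1).
- apply: (@ler0_derive1_le_cc _ g x 1); rewrite ?in_itv/= ?lexx ?(ltW x1) //.
  + by move=> z; rewrite in_itv/= => /andP[xz _]; apply: dg (lt_trans x0 xz).
  + move=> z; rewrite in_itv/= => /andP[xz z1]; rewrite g'E ?(lt_trans x0 xz) //.
    have z1' : z - 1 <= 0 by rewrite subr_le0 ltW.
    by rewrite exprS -mulrA mulr_le0_ge0 // divr_ge0 ?sqr_ge0.
  + apply: continuous_in_subspaceT => z; rewrite inE/= in_itv/= => /andP[xz _].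
    exact: cg (lt_le_trans x0 xz).
Qed.

Lemma xlnx_ge (x : R) : 0 <= x ->
  x - 1 + 3 * (x - 1) ^+ 2 / (2 * (x + 2)) <= x * ln x.
Proof.
rewrite le_eqVlt => /predU1P[<-|x0].
  rewrite ln0 // mulr0.
  have -> : (0 : R) - 1 + 3 * (0 - 1) ^+ 2 / (2 * (0 + 2)) = - 4^-1 by field.
  by rewrite oppr_le0 invr_ge0.
have := g_ge1 x0; rewrite /g ln1 invr1 add0r mulr1.
rewrite -(ler_pM2l x0) -subr_ge0 => h; rewrite -subr_ge0.
suff -> : x * ln x - (x - 1 + 3 * (x - 1) ^+ 2 / (2 * (x + 2)))
  = x * (ln x + 4^-1 * x^-1 + 27/4 * (x + 2)^-1) - x * (4^-1 + 27/4 * (1 + 2)^-1) by [].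
by field; rewrite !gt_eqF ?addr_gt0.
Qed.

Lemma pinsker_term (q p : R) : 0 <= q -> 0 <= p -> (p = 0 -> q = 0) ->
  3 * (q - p) ^+ 2 / (2 * (q + 2 * p)) <= q * ln (q / p) - q + p.
Proof.
move=> q0; rewrite le_eqVlt => /predU1P[<- /(_ erefl)->|p0 _].
  by rewrite !(subr0, mul0r, addr0, expr0n, mulr0, invr0).
have := ler_wpM2l (ltW p0) (xlnx_ge (divr_ge0 q0 (ltW p0))).
suff -> : p * (q / p - 1 + 3 * (q / p - 1) ^+ 2 / (2 * (q / p + 2)))
        = q - p + 3 * (q - p) ^+ 2 / (2 * (q + 2 * p)).
  have -> : p * (q / p * ln (q / p)) = q * ln (q / p) by field; rewrite gt_eqF.
  lra.
have qp2 : 0 < q / p + 2 by rewrite ltr_wpDl ?divr_ge0 // ltW.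
by field; rewrite !gt_eqF // ltr_wpDl ?mulr_gt0.
Qed.

(* Cauchy-Schwarz in Engel form; [k] is the optimal multiplier in
   [0 <= \sum_i (c i - k * d i)^2 / d i]. *)
Lemma sqr_sum_le_sum_div (I : finType) (c d : I -> R) :
  (forall i, 0 <= d i) -> (forall i, d i = 0 -> c i = 0) ->
  (\sum_i c i) ^+ 2 <= (\sum_i c i ^+ 2 / d i) * \sum_i d i.
Proof.
move=> d0 dc.
have [Dz|D0] := eqVneq (\sum_i d i) 0.
  have dz i : d i = 0 by apply: (psumr_eq0P _ Dz).
  by rewrite Dz big1 ?expr0n ?mulr0 // => i _; rewrite dc.
have Dp : 0 < \sum_i d i by rewrite lt_neqAle eq_sym D0 sumr_ge0.
set k := (\sum_i c i) / \sum_i d i.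
have expand i : (c i - k * d i) ^+ 2 / d i = c i ^+ 2 / d i - 2 * k * c i + k ^+ 2 * d i.
  have [di0|di0] := eqVneq (d i) 0; first by rewrite di0 (dc _ di0); ring.
  by field.
have : 0 <= \sum_i (c i - k * d i) ^+ 2 / d i.
  by apply: sumr_ge0 => i _; rewrite divr_ge0 ?sqr_ge0.
rewrite (eq_bigr _ (fun i _ => expand i)) !big_split /= sumrN -!mulr_sumr /k.
set A := \sum_i _ / _; set C := \sum_i c i; set D := \sum_i d i.
have -> : A + - (2 * (C / D) * C) + (C / D) ^+ 2 * D = (A * D - C ^+ 2) / D by field.
by rewrite ler_pdivlMr // mul0r subr_ge0.
Qed.

(* [Qstar rho] is the convex conjugate of [r |-> r^2 / 2] restricted to [[-rho, rho]]. *)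
Lemma Qstar_ge (rho k r : R) : `|r| <= rho -> k * r - r ^+ 2 / 2 <= Qstar rho k.
Proof.
move=> r_rho; rewrite /Qstar -(real_normK (num_real k)) -(real_normK (num_real r)).
apply: le_trans (_ : `|k| * `|r| - `|r| ^+ 2 / 2 <= _).
  by rewrite lerD2r -normrM ler_norm.
have k0 := normr_ge0 k; have r0 := normr_ge0 r.
have [k_rho|k_rho] := leP `|k| rho.
  rewrite max_r ?subr_le0 // expr0n mul0r subr0.
  by have := sqr_ge0 (`|k| - `|r|); nra.
have h1 : 0 <= rho - `|r| by rewrite subr_ge0.
have h2 : 0 <= `|k| - rho by rewrite subr_ge0 ltW.
rewrite max_l //; have := mulr_ge0 h1 h2; have := mulr_ge0 h1 h1; lra.
Qed.

Lemma min_div1_mul (s m : R) : 0 <= s -> 0 <= m -> Num.min (m / s) 1 * s = Num.min s m.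
Proof.
move=> s0 m0; have [->|sn0] := eqVneq s 0; first by rewrite !mulr0 min_l.
by rewrite minr_pMl // mul1r divfK // minC.
Qed.

Lemma subr1_min_div1_mul (s m : R) : 0 <= s -> 0 <= m ->
  (1 - Num.min (m / s) 1) * s = Num.max (s - m) 0.
Proof.
move=> s0 m0; rewrite mulrBl mul1r min_div1_mul //.
by have [ms|sm] := leP m s; [rewrite max_l // subr_ge0 | rewrite subrr max_r // subr_le0 ltW].
Qed.

Lemma ler_nondecr_nat (f : nat -> R) m k i j :
  (forall t, (m <= t < k)%N -> f t <= f t.+1) -> (m <= i <= j)%N -> (j <= k)%N ->
  f i <= f j.
Proof.
move=> fm /andP[mi]; elim: j => [|j IH]; first by rewrite leqn0 => /eqP->.
rewrite leq_eqVlt ltnS => /predU1P[->//|ij] jk.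
by apply: le_trans (IH ij (ltnW jk)) (fm _ _); rewrite (leq_trans mi ij) jk.
Qed.

Lemma nonincr_gt0 (f : nat -> R) T : (forall t, (1 <= t <= T)%N -> f t.+1 <= f t) ->
  0 < f T.+1 -> forall t, (1 <= t <= T.+1)%N -> 0 < f t.
Proof.
move=> fm fT t tT; apply: lt_le_trans fT _; rewrite -lerN2.
by apply: (@ler_nondecr_nat (fun t => - f t) 1 T.+1) => // s sT; rewrite lerN2 fm.
Qed.

Lemma nondecr_gt0 (f : nat -> R) T : 0 < f 1%N ->
  (forall t, (1 <= t < T)%N -> f t <= f t.+1) -> forall t, (1 <= t <= T)%N -> 0 < f t.
Proof.
by move=> f1 fm t /andP[t1 tT]; apply: lt_le_trans f1 (ler_nondecr_nat fm _ tT); rewrite t1.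
Qed.

Lemma sum_abel_le (c K : nat -> R) T : (0 < T)%N ->
  (forall t, (1 <= t < T)%N -> c t.+1 <= c t) -> (forall t, 0 <= K t) ->
  \sum_(1 <= t < T.+1) c t * (K t - K t.+1) <= c 1%N * K 1%N - c T * K T.+1.
Proof.
move=> + + K0; elim: T => [//|[_ _ _|T IH _ cm]]; first by rewrite big_nat1 mulrBr.
have {}IH : \sum_(1 <= t < T.+2) c t * (K t - K t.+1) <= c 1%N * K 1%N - c T.+1 * K T.+2.
  by apply: IH => // t /andP[t1 tT]; apply: cm; rewrite t1 ltnW.
have c21 : c T.+2 <= c T.+1 by apply: cm; rewrite ltn0Sn ltnSn.
have := ler_wpM2r (K0 T.+2) c21.
by rewrite big_nat_recr //= mulrBr; lra.
Qed.

End ScalarInequalities.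

Section Vectors.
Variables (R : realType) (n : nat).
Local Notation vec := (vec R n).
Implicit Types (p q w x y : vec).

Definition dist1 (x y : vec) : R := \sum_i `|x i - y i|.

Lemma simplex_ge0 p : simplex p -> forall i, 0 <= p i.
Proof. by case. Qed.

Lemma dist1C x y : dist1 x y = dist1 y x.
Proof. by apply: eq_bigr => i _; rewrite distrC. Qed.

Lemma dist1_ge0 x y : 0 <= dist1 x y.
Proof. exact: sumr_ge0. Qed.

Lemma dist1_le2 p q : simplex p -> simplex q -> dist1 p q <= 2.
Proof.
move=> sp sq; apply: le_trans (_ : \sum_i (p i + q i) <= 2).
  apply: ler_sum => i _; apply: le_trans (ler_normB _ _) _.
  by rewrite !ger0_norm ?simplex_ge0.
by rewrite big_split /= (proj2 sp) (proj2 sq).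
Qed.

Lemma supnorm_ge0 x : 0 <= supnorm x.
Proof. exact: bigmax_ge_id. Qed.

Lemma ler_supnorm x i : `|x i| <= supnorm x.
Proof. exact: le_bigmax. Qed.

Lemma supnormZ (c : R) x : supnorm (fun i => c * x i) = `|c| * supnorm x.
Proof.
apply/eqP; rewrite eq_le; apply/andP; split.
  apply: bigmax_le => [|i _]; first by rewrite mulr_ge0 ?supnorm_ge0.
  by rewrite normrM ler_wpM2l ?ler_supnorm.
have [->|c0] := eqVneq c 0; first by rewrite normr0 mul0r supnorm_ge0.
rewrite -ler_pdivlMl ?normr_gt0 //.
apply: bigmax_le => [|i _]; first by rewrite mulr_ge0 ?invr_ge0 ?supnorm_ge0.
by rewrite ler_pdivlMl ?normr_gt0 // -normrM (ler_supnorm (fun i => c * x i)).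
Qed.

Lemma supnorm_subC x y : supnorm (vsub x y) = supnorm (vsub y x).
Proof. by apply: eq_bigr => i _; rewrite /vsub distrC. Qed.

Lemma dotvC x y : dotv x y = dotv y x.
Proof. by apply: eq_bigr => i _; rewrite mulrC. Qed.

Lemma dotv_subr x y w : dotv x (vsub y w) = dotv x y - dotv x w.
Proof. by rewrite /dotv -sumrB; apply: eq_bigr => i _; rewrite mulrBr. Qed.

Lemma dotv_subl x y w : dotv (vsub y w) x = dotv y x - dotv w x.
Proof. by rewrite dotvC dotv_subr !(dotvC x). Qed.

Lemma dotv_le_supnorm_dist1 x w q : dotv x (vsub w q) <= supnorm x * dist1 w q.
Proof.
rewrite /dotv /dist1 mulr_sumr; apply: ler_sum => i _.
by apply: le_trans (ler_norm _) _; rewrite normrM ler_wpM2r ?ler_supnorm.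
Qed.

Lemma supnorm_sub_lhat' x y :
  supnorm (vsub x (lhat' x y)) = Num.min (supnorm (vsub x y)) (supnorm x).
Proof.
set lam := Num.min (supnorm x / supnorm (vsub x y)) 1.
have -> : vsub x (lhat' x y) = (fun i => lam * vsub x y i).
  by apply/funext => i; rewrite /vsub /lhat' -/lam; ring.
rewrite supnormZ ger0_norm; last by rewrite le_min ler01 divr_ge0 ?supnorm_ge0.
by rewrite min_div1_mul ?supnorm_ge0.
Qed.

Lemma supnorm_lhat'_sub x y :
  supnorm (vsub y (lhat' x y)) = Num.max (supnorm (vsub x y) - supnorm x) 0.
Proof.
set lam := Num.min (supnorm x / supnorm (vsub x y)) 1.
have -> : vsub y (lhat' x y) = (fun i => (1 - lam) * vsub y x i).
  by apply/funext => i; rewrite /vsub /lhat' -/lam; ring.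
rewrite supnormZ ger0_norm; last by rewrite subr_ge0 ge_min lexx orbT.
by rewrite -supnorm_subC subr1_min_div1_mul ?supnorm_ge0.
Qed.

End Vectors.

Section ExponentialWeights.
Variables (R : realType) (n : nat).
Local Notation vec := (vec R n).
Implicit Types (p q w x y : vec) (eta : R).

Definition klr (q p : vec) : R := \sum_i q i * ln (q i / p i).

Definition supp_sub (q p : vec) : Prop := forall i, q i != 0 -> p i != 0.

Definition partZ p eta x : R := \sum_i p i * expR (- (eta * x i)).

Definition mix_loss p eta x : R := - ln (partZ p eta x) / eta.

Lemma partZ_gt0 p eta x : simplex p -> 0 < partZ p eta x.
Proof.
move=> [p0 p1]; have t0 i : 0 <= p i * expR (- (eta * x i)) by rewrite mulr_ge0.
rewrite lt_neqAle sumr_ge0 // andbT eq_sym; apply/negP => /eqP/(psumr_eq0P (fun i _ => t0 i)) z.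
have : \sum_i p i = 0.
  by apply: big1 => i _; have /eqP := z i isT; rewrite mulf_eq0 (gt_eqF (expR_gt0 _)) orbF => /eqP.
by rewrite p1 => /eqP; rewrite oner_eq0.
Qed.

Lemma mulr_mix_loss p eta x : eta != 0 -> eta * mix_loss p eta x = - ln (partZ p eta x).
Proof. by move=> e0; rewrite mulrC divfK. Qed.

Lemma expstepE p eta x i : expstep p eta x i = p i * expR (- (eta * x i)) / partZ p eta x.
Proof. by []. Qed.

Lemma expstep_simplex p eta x : simplex p -> simplex (expstep p eta x).
Proof.
move=> sp; have Z0 := partZ_gt0 eta x sp; split=> [i|].
  by rewrite expstepE divr_ge0 ?mulr_ge0 ?expR_ge0 ?(ltW Z0) ?(simplex_ge0 sp).
by rewrite -mulr_suml divff ?gt_eqF.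
Qed.

Lemma expstep_eq0 p eta x i : simplex p -> (expstep p eta x i == 0) = (p i == 0).
Proof.
move=> sp; rewrite expstepE !mulf_eq0 invr_eq0 (gt_eqF (expR_gt0 _)).
by rewrite (gt_eqF (partZ_gt0 _ _ sp)) !orbF.
Qed.

Lemma supp_sub_expstep q p eta x : simplex p -> supp_sub q p -> supp_sub q (expstep p eta x).
Proof. by move=> sp qp i /qp; rewrite expstep_eq0. Qed.

Lemma expstep_supp_sub p eta x : simplex p -> supp_sub (expstep p eta x) p.
Proof. by move=> sp i; rewrite expstep_eq0. Qed.

Lemma klr_self p : klr p p = 0.
Proof.
apply: big1 => i _; have [->|p0] := eqVneq (p i) 0; first by rewrite mul0r.
by rewrite divff // ln1 mulr0.
Qed.

Lemma klr_expstep q p eta x : simplex p -> simplex q -> supp_sub q p ->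
  klr q (expstep p eta x) = klr q p + eta * dotv x q + ln (partZ p eta x).
Proof.
move=> sp sq qp; have Z0 := partZ_gt0 eta x sp.
have termE i : q i * ln (q i / expstep p eta x i)
    = q i * ln (q i / p i) + eta * (x i * q i) + q i * ln (partZ p eta x).
  have [->|q0] := eqVneq (q i) 0; first by rewrite !(mul0r, mulr0, addr0).
  have qi : 0 < q i by rewrite lt_neqAle eq_sym q0 simplex_ge0.
  have pi : 0 < p i by rewrite lt_neqAle eq_sym qp // simplex_ge0.
  have -> : q i / expstep p eta x i = q i / p i * (expR (eta * x i) * partZ p eta x).
    by rewrite expstepE expRN; field; rewrite !gt_eqF ?expR_gt0.
  rewrite [ln (_ / _ * _)]lnM ?posrE ?divr_gt0 ?mulr_gt0 ?expR_gt0 //.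
  rewrite [ln (expR _ * _)]lnM ?posrE ?expR_gt0 // expRK; ring.
rewrite /klr (eq_bigr _ (fun i _ => termE i)) !big_split /= -mulr_sumr.
by rewrite -mulr_suml (proj2 sq) mul1r.
Qed.

Lemma klr_expstep_base p eta y : simplex p ->
  klr (expstep p eta y) p = - (eta * dotv y (expstep p eta y) + ln (partZ p eta y)).
Proof.
move=> sp; have := klr_expstep eta y sp (expstep_simplex eta y sp) (expstep_supp_sub sp).
by rewrite klr_self => /eqP; rewrite eq_sym -addrA addr_eq0 => /eqP.
Qed.

(* The pointwise bound [pinsker_term] summed, then Cauchy-Schwarz with weights
   [q i + 2 p i], which sum to [3]. *)
Lemma pinsker q p : simplex p -> simplex q -> supp_sub q p ->
  dist1 q p ^+ 2 / 2 <= klr q p.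
Proof.
move=> sp sq qp; have q0 := simplex_ge0 sq; have p0 := simplex_ge0 sp.
have pq i : p i = 0 -> q i = 0 := contra_eq (qp i).
have klrE : klr q p = \sum_i (q i * ln (q i / p i) - q i + p i).
  by rewrite !big_split /= sumrN (proj2 sq) (proj2 sp) subrK.
have d3 : \sum_i (q i + 2 * p i) = 3.
  by rewrite big_split /= -mulr_sumr (proj2 sq) (proj2 sp); lra.
have cs : dist1 q p ^+ 2 <= (\sum_i `|q i - p i| ^+ 2 / (q i + 2 * p i)) * 3.
  rewrite -[X in _ * X]d3; apply: sqr_sum_le_sum_div => i.
    by rewrite addr_ge0 ?mulr_ge0.
  move=> /eqP; rewrite paddr_eq0 ?mulr_ge0 // mulf_eq0 pnatr_eq0 /=.
  by move=> /andP[/eqP-> /eqP->]; rewrite subr0 normr0.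
apply: le_trans (_ : 3 / 2 * \sum_i `|q i - p i| ^+ 2 / (q i + 2 * p i) <= _).
  by move: cs; lra.
rewrite klrE mulr_sumr; apply: ler_sum => i _.
have -> : 3 / 2 * (`|q i - p i| ^+ 2 / (q i + 2 * p i))
        = 3 * (q i - p i) ^+ 2 / (2 * (q i + 2 * p i)).
  by rewrite real_normK ?num_real // invfM; ring.
exact: pinsker_term (q0 i) (p0 i) (pq i).
Qed.

Lemma klr_ge0 q p : simplex p -> simplex q -> supp_sub q p -> 0 <= klr q p.
Proof. by move=> sp sq qp; apply: le_trans (pinsker sp sq qp); rewrite divr_ge0 ?sqr_ge0. Qed.

Lemma klr_expstep_sym p eta x y : simplex p ->
  klr (expstep p eta y) (expstep p eta x) + klr (expstep p eta x) (expstep p eta y)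
  = eta * dotv (vsub x y) (vsub (expstep p eta y) (expstep p eta x)).
Proof.
move=> sp; have sx := expstep_simplex eta x sp; have sy := expstep_simplex eta y sp.
have xp : supp_sub (expstep p eta x) p := expstep_supp_sub sp.
have yp : supp_sub (expstep p eta y) p := expstep_supp_sub sp.
rewrite !klr_expstep // !klr_expstep_base // dotv_subl !dotv_subr; ring.
Qed.

Lemma mix_loss_le p q eta x : simplex p -> simplex q -> supp_sub q p -> 0 < eta ->
  mix_loss p eta x <= dotv x q + klr q p / eta.
Proof.
move=> sp sq qp e0.
have := klr_ge0 (expstep_simplex eta x sp) sq (supp_sub_expstep eta x sp qp).
rewrite klr_expstep // /mix_loss ler_pdivrMr // mulrDl divfK ?gt_eqF //; lra.
Qed.

Lemma mix_loss_expstep p eta y x : simplex p ->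
  mix_loss (expstep p eta y) eta x
  = mix_loss p eta (fun i => y i + x i) - mix_loss p eta y.
Proof.
move=> sp; rewrite /mix_loss.
have -> : partZ (expstep p eta y) eta x = partZ p eta (fun i => y i + x i) / partZ p eta y.
  rewrite /partZ mulr_suml; apply: eq_bigr => i _.
  by rewrite expstepE mulrDr opprD expRD; ring.
by rewrite ln_div ?posrE ?partZ_gt0 //; ring.
Qed.

Lemma le_mix_loss_eta p eta eta' x : simplex p -> 0 < eta' -> eta' <= eta ->
  mix_loss p eta x <= mix_loss p eta' x.
Proof.
move=> sp e'0 ee'; have e0 := lt_le_trans e'0 ee'.
set q := expstep p eta' x; have sq : simplex q := expstep_simplex eta' x sp.
have qp : supp_sub q p := expstep_supp_sub sp.
apply: le_trans (mix_loss_le x sp sq qp e0) _.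
have -> : mix_loss p eta' x = dotv x q + klr q p / eta'.
  by rewrite klr_expstep_base // /mix_loss; field; rewrite gt_eqF.
by rewrite lerD2l ler_wpM2l ?klr_ge0 // lef_pV2 ?posrE.
Qed.

Lemma stability_Qstar p x y eta : simplex p -> 0 < eta ->
  eta * (dotv x (expstep p eta y) - mix_loss p eta x)
  <= Qstar 2 (eta * supnorm (vsub x y)) - klr (expstep p eta y) p.
Proof.
move=> sp e0; set w := expstep p eta y; set q := expstep p eta x.
have sw : simplex w := expstep_simplex eta y sp.
have sq : simplex q := expstep_simplex eta x sp.
have qw : supp_sub q w := supp_sub_expstep eta y sp (expstep_supp_sub sp).
have gibbs := klr_expstep eta x sp sw (expstep_supp_sub sp).
have sym := klr_expstep_sym eta x y sp.
have pins := pinsker sw sq qw; rewrite dist1C in pins.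
have r2 : `|dist1 w q| <= 2 by rewrite ger0_norm ?dist1_ge0 ?dist1_le2.
have conj := Qstar_ge (eta * supnorm (vsub x y)) r2.
have hoelder : eta * dotv (vsub x y) (vsub w q) <= eta * (supnorm (vsub x y) * dist1 w q).
  by rewrite ler_pM2l ?dotv_le_supnorm_dist1.
rewrite mulrBr mulr_mix_loss ?gt_eqF // opprK dotvC.
by rewrite dotvC in gibbs; lra.
Qed.

Lemma dist1_expstep_le p eta y y' : simplex p -> 0 <= eta ->
  dist1 (expstep p eta y) (expstep p eta y') <= eta * supnorm (vsub y y').
Proof.
move=> sp e0; set w := expstep p eta y; set v := expstep p eta y'.
have sw : simplex w := expstep_simplex eta y sp.
have sv : simplex v := expstep_simplex eta y' sp.
have pins_wv := pinsker sv sw (supp_sub_expstep eta y' sp (expstep_supp_sub sp)).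
have pins_vw := pinsker sw sv (supp_sub_expstep eta y sp (expstep_supp_sub sp)).
have sym := klr_expstep_sym eta y' y sp; rewrite -/w -/v in sym.
have hoelder := dotv_le_supnorm_dist1 (vsub y' y) w v.
rewrite supnorm_subC in hoelder; rewrite dist1C in pins_vw.
set r := dist1 w v in pins_wv pins_vw hoelder *.
set s := supnorm (vsub y y') in hoelder *.
have [->|rn0] := eqVneq r 0; first by rewrite mulr_ge0 ?supnorm_ge0.
have rp : 0 < r by rewrite lt_neqAle eq_sym rn0 dist1_ge0.
(* [r^2 <= KL(w || v) + KL(v || w) = eta <y' - y, w - v> <= eta s r] *)
rewrite -(ler_pM2r rp).
have : eta * dotv (vsub y' y) (vsub w v) <= eta * (s * r) by apply: ler_wpM2l.
rewrite -sym mulrA -expr2; lra.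
Qed.

Lemma stability_Phix p x y eta : simplex p -> 0 < eta ->
  eta * (dotv x (expstep p eta y) - mix_loss p eta x)
  <= Phix eta x y - klr (expstep p eta (lhat' x y)) p.
Proof.
move=> sp e0; set w := expstep p eta y; set v := expstep p eta (lhat' x y).
have stab := stability_Qstar x (lhat' x y) sp e0.
rewrite supnorm_sub_lhat' -/v in stab.
have lip := dist1_expstep_le y (lhat' x y) sp (ltW e0).
rewrite supnorm_lhat'_sub -/w -/v in lip.
have r2 := dist1_le2 (expstep_simplex eta y sp) (expstep_simplex eta (lhat' x y) sp).
have hoelder := dotv_le_supnorm_dist1 x w v; rewrite dotv_subr in hoelder.
have : eta * supnorm x * dist1 w v
    <= eta * supnorm x * Num.min (eta * Num.max (supnorm (vsub x y) - supnorm x) 0) 2.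
  apply: ler_wpM2l; first by rewrite mulr_ge0 ?supnorm_ge0 ?ltW.
  by rewrite le_min lip r2.
have : eta * (dotv x w - dotv x v) <= eta * (supnorm x * dist1 w v) by rewrite ler_pM2l.
rewrite /Phix; lra.
Qed.

End ExponentialWeights.

Section Learners.
Variables (R : realType) (n : nat).
Local Notation vec := (vec R n).
Implicit Types (a u : vec) (l : nat -> vec).

Definition cumloss l (t : nat) : vec := fun i => \sum_(1 <= s < t) l s i.

Lemma cumlossS l t : (1 <= t)%N ->
  cumloss l t.+1 = (fun i => cumloss l t i + l t i).
Proof. by move=> t1; apply/funext => i; rewrite /cumloss big_nat_recr. Qed.

Lemma ftrl_mix_loss_le T a u (eta : nat -> R) l : simplex a -> simplex u ->
  (forall t, (1 <= t <= T)%N -> eta t.+1 <= eta t) -> 0 < eta T.+1 -> supp_sub u a ->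
  \sum_(1 <= t < T.+1) mix_loss (ftrl_tilde a eta l t) (eta t) (l t)
  <= \sum_(1 <= t < T.+1) dotv (l t) u + (eta T.+1)^-1 * klr u a.
Proof.
move=> sa su em eT ua.
have ep := nonincr_gt0 em eT.
(* [ftrl_tilde a eta l t] is [a] tilted by [eta t * cumloss l t], so the [t]-th mix
   loss is [M t.+1 - M t] with [eta t] in place of [eta t.+1] in [M t.+1]. *)
set M := fun t => mix_loss a (eta t) (cumloss l t).
apply: le_trans (_ : \sum_(1 <= t < T.+1) (M t.+1 - M t) <= _).
  apply: ler_sum_nat => t /andP[t1 tT].
  rewrite /ftrl_tilde mix_loss_expstep // -cumlossS // lerD2r.
  by apply: le_mix_loss_eta sa (ep _ _) (em _ _); rewrite ?t1.
have M1 : M 1%N = 0.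
  rewrite /M /mix_loss /partZ (eq_bigr a) ?(proj2 sa) ?ln1 ?oppr0 ?mul0r // => i _.
  by rewrite /cumloss big_geq // mulr0 oppr0 expR0 mulr1.
have -> : \sum_(1 <= t < T.+1) dotv (l t) u = dotv (cumloss l T.+1) u.
  rewrite /dotv /cumloss exchange_big /=; apply: eq_bigr => i _.
  by rewrite mulr_suml.
rewrite telescope_sumr // M1 subr0 mulrC.
exact: mix_loss_le.
Qed.

Lemma omd_tildeS a (th : nat -> R) l t : (1 <= t)%N ->
  omd_tilde a th l t.+1 = expstep (omd_tilde a th l t) (th t) (l t).
Proof. by case: t. Qed.

Lemma omd_tilde_simplex a (th : nat -> R) l t :
  simplex a -> simplex (omd_tilde a th l t).
Proof.
by move=> sa; elim: t => [|t IH] //=; case: eqP => // _; exact: expstep_simplex.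
Qed.

Lemma supp_sub_omd_tilde u a (th : nat -> R) l t : simplex a -> supp_sub u a ->
  supp_sub u (omd_tilde a th l t).
Proof.
move=> sa ua; elim: t => [|t IH] //=; case: eqP => // _.
exact: supp_sub_expstep (omd_tilde_simplex th l t sa) IH.
Qed.

Lemma omd_mix_loss_le T a u (th : nat -> R) l : simplex a -> simplex u ->
  0 < th 1%N -> (forall t, (1 <= t < T)%N -> th t <= th t.+1) -> supp_sub u a ->
  \sum_(1 <= t < T.+1) mix_loss (omd_tilde a th l t) (th t) (l t)
  <= \sum_(1 <= t < T.+1) dotv (l t) u + (th 1%N)^-1 * klr u a.
Proof.
move=> sa su th1 thm ua.
have thp := nondecr_gt0 th1 thm.
have swt t : simplex (omd_tilde a th l t) := omd_tilde_simplex th l t sa.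
have uwt t : supp_sub u (omd_tilde a th l t) := supp_sub_omd_tilde th l t sa ua.
set K := fun t => klr u (omd_tilde a th l t).
have K0 t : 0 <= K t := klr_ge0 (swt t) su (uwt t).
have mE t : (1 <= t < T.+1)%N ->
    mix_loss (omd_tilde a th l t) (th t) (l t) = dotv (l t) u + (th t)^-1 * (K t - K t.+1).
  move=> tT; rewrite /K omd_tildeS ?(andP tT).1 // klr_expstep // /mix_loss.
  by field; rewrite gt_eqF ?thp.
rewrite (eq_big_nat _ _ mE) big_split /= lerD2l.
case: T => [|T] in thm thp mE *.
  by rewrite big_geq //; apply: mulr_ge0; [rewrite invr_ge0 ltW | exact: (K0 1%N)].
have nonincr t : (1 <= t < T.+1)%N -> (th t.+1)^-1 <= (th t)^-1.
  by move=> /andP[t1 tT]; rewrite lef_pV2 ?posrE ?thp ?thm ?t1 // ltnW.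
apply: le_trans (@sum_abel_le _ (fun t => (th t)^-1) K T.+1 isT nonincr K0) _.
have : 0 <= (th T.+1)^-1 * K T.+2.
  by rewrite mulr_ge0 // invr_ge0 ltW // (thp T.+1 (leqnn _)).
have -> : klr u a = K 1%N by [].
rewrite /=; lra.
Qed.

End Learners.

Section Regret.
Variables (R : realType) (n : nat).
Local Notation vec := (vec R n).
Implicit Types (p q u a : vec).

Local Open Scope ereal_scope.

Lemma kl_EFin q p : supp_sub q p -> kl q p = (klr q p)%:E.
Proof.
move=> qp; rewrite /kl /klr -sumEFin; apply: eq_bigr => i _.
by have [->|/qp/negbTE->] := eqVneq (q i) 0%R; rewrite ?mul0r.
Qed.

Lemma kl_pinfty q p : ~ supp_sub q p -> kl q p = +oo.
Proof.
move=> qp; have [i [qi0 pi0]] : exists i, q i != 0%R /\ p i = 0%R.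
  apply: contra_notP qp => nex i qi; apply/negP => /eqP pi.
  by apply: nex; exists i.
apply/eqP; rewrite esum_eqy; last by move=> j _; case: ifP => // _; case: ifP.
by apply/existsP; exists i; rewrite /= (negbTE qi0) pi0 eqxx.
Qed.

Lemma regret_le_sum_dotv T (phi : nat -> vec -> \bar R) (w l : nat -> vec) u :
  (forall t, (1 <= t <= T)%N -> exists g, subgrad (phi t) u g) ->
  (forall t, (1 <= t <= T)%N -> subgrad (phi t) (w t) (l t)) ->
  regret T phi w u <= (\sum_(1 <= t < T.+1) dotv (l t) (vsub (w t) u))%:E.
Proof.
move=> hu hw.
have finw t : (1 <= t < T.+1)%N -> phi t (w t) = (fine (phi t (w t)))%:E.
  by move=> /hw[/fineK].
have finu t : (1 <= t < T.+1)%N -> phi t u = (fine (phi t u))%:E.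
  by move=> /hu[g [/fineK]].
rewrite /regret (eq_big_nat _ _ finw) (eq_big_nat _ _ finu) !sumEFin -EFinB lee_fin.
rewrite -sumrB; apply: ler_sum_nat => t tT.
have [_ /(_ u)] := hw t tT; rewrite finw // finu // -EFinD lee_fin.
by rewrite !dotv_subr; move=> h; rewrite -opprB lerBrDl; lra.
Qed.

Lemma regret_le_of_stability T (phi : nat -> vec -> \bar R) (l w w' wt : nat -> vec)
    u a (c : R) (eta B : nat -> R) :
  (forall t, (1 <= t <= T)%N -> exists g, subgrad (phi t) u g) ->
  (forall t, (1 <= t <= T)%N -> subgrad (phi t) (w t) (l t)) ->
  (0 < c)%R -> (forall t, (1 <= t <= T)%N -> 0 < eta t)%R ->
  (forall t, (1 <= t <= T)%N -> supp_sub (w' t) (wt t)) ->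
  (forall t, (1 <= t <= T)%N ->
     eta t * (dotv (l t) (w t) - mix_loss (wt t) (eta t) (l t)) <= B t - klr (w' t) (wt t))%R ->
  (supp_sub u a -> \sum_(1 <= t < T.+1) mix_loss (wt t) (eta t) (l t)
                   <= \sum_(1 <= t < T.+1) dotv (l t) u + c * klr u a)%R ->
  regret T phi w u <= c%:E * kl u a + \sum_(1 <= t < T.+1) ((eta t)^-1 * B t)%:E
                      - \sum_(1 <= t < T.+1) (eta t)^-1%:E * kl (w' t) (wt t).
Proof.
move=> hu hw c0 ep ww' stab dec.
have klE t : (1 <= t < T.+1)%N ->
    (eta t)^-1%:E * kl (w' t) (wt t) = ((eta t)^-1 * klr (w' t) (wt t))%:E.
  by move=> tT; rewrite (kl_EFin (ww' t tT)) EFinM.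
rewrite (eq_big_nat _ _ klE) !sumEFin.
have [ua|ua] := pselect (supp_sub u a); last first.
  by rewrite kl_pinfty // gt0_muley ?lte_fin // (@addye _ (_%:E)) // leey.
apply: le_trans (regret_le_sum_dotv hu hw) _.
rewrite kl_EFin // -EFinM -EFinD lee_fin.
have gap : (\sum_(1 <= t < T.+1) (dotv (l t) (w t) - mix_loss (wt t) (eta t) (l t))
    <= \sum_(1 <= t < T.+1) ((eta t)^-1 * B t - (eta t)^-1 * klr (w' t) (wt t)))%R.
  by apply: ler_sum_nat => t tT; rewrite -mulrBr ler_pdivlMl ?ep ?stab.
have -> : (\sum_(1 <= t < T.+1) dotv (l t) (vsub (w t) u)
    = \sum_(1 <= t < T.+1) (dotv (l t) (w t) - mix_loss (wt t) (eta t) (l t))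
      + (\sum_(1 <= t < T.+1) mix_loss (wt t) (eta t) (l t)
         - \sum_(1 <= t < T.+1) dotv (l t) u))%R.
  by rewrite -sumrB -big_split /=; apply: eq_bigr => t _; rewrite dotv_subr; ring.
by move: gap (dec ua); rewrite !sumrB; lra.
Qed.

Lemma expweights_regret_le T (phi : nat -> vec -> \bar R) (l lh wt : nat -> vec) u a
    (eta : nat -> R) (c : R) :
  (forall t, (1 <= t <= T)%N -> exists g, subgrad (phi t) u g) ->
  (forall t, simplex (wt t)) -> (forall t, (1 <= t <= T)%N -> 0 < eta t)%R -> (0 < c)%R ->
  (supp_sub u a -> \sum_(1 <= t < T.+1) mix_loss (wt t) (eta t) (l t)
                   <= \sum_(1 <= t < T.+1) dotv (l t) u + c * klr u a)%R ->
  let w := fun t => expstep (wt t) (eta t) (lh t) in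
  let v := fun t => expstep (wt t) (eta t) (lhat' (l t) (lh t)) in
  (forall t, (1 <= t <= T)%N -> subgrad (phi t) (w t) (l t)) ->
  regret T phi w u <= c%:E * kl u a
       + \sum_(1 <= t < T.+1) ((eta t)^-1 * Qstar 2 (eta t * supnorm (vsub (l t) (lh t))))%:E
       - \sum_(1 <= t < T.+1) (eta t)^-1%:E * kl (w t) (wt t) /\
  regret T phi w u <= c%:E * kl u a
       + \sum_(1 <= t < T.+1) ((eta t)^-1 * Phix (eta t) (l t) (lh t))%:E
       - \sum_(1 <= t < T.+1) (eta t)^-1%:E * kl (v t) (wt t).
Proof.
move=> hu swt ep c0 dec w v hw.
split; apply: (regret_le_of_stability hu hw c0 ep _ _ dec) => t tT.
- exact: expstep_supp_sub (swt t).
- exact: stability_Qstar (swt t) (ep t tT).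
- exact: expstep_supp_sub (swt t).
- exact: stability_Phix (swt t) (ep t tT).
Qed.

End Regret.

Theorem corollary4 (R : realType) (n T : nat)
  (phi : nat -> vec R n -> \bar R) (l lh : nat -> vec R n) (a u : vec R n) :
  (forall t, (1 <= t <= T)%N -> proper_fun (phi t)) ->
  (forall t, (1 <= t <= T)%N -> forall w, simplex w -> exists g, subgrad (phi t) w g) ->
  simplex a -> simplex u ->
  (* (i) *)
  (forall eta : nat -> R,
    (forall t, (1 <= t <= T)%N -> eta t.+1 <= eta t) -> 0 < eta T.+1 ->
    let wt := ftrl_tilde a eta l in
    let w := fun t => expstep (wt t) (eta t) (lh t) in
    let v := fun t => expstep (wt t) (eta t) (lhat' (l t) (lh t)) in
    (forall t, (1 <= t <= T)%N -> subgrad (phi t) (w t) (l t)) ->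
    (regret T phi w u <=
       (eta T.+1)^-1%:E * kl u a
       + \sum_(1 <= t < T.+1)
           ((eta t)^-1 * Qstar 2 (eta t * supnorm (vsub (l t) (lh t))))%:E
       - \sum_(1 <= t < T.+1) (eta t)^-1%:E * kl (w t) (wt t))%E /\
    (regret T phi w u <=
       (eta T.+1)^-1%:E * kl u a
       + \sum_(1 <= t < T.+1) ((eta t)^-1 * Phix (eta t) (l t) (lh t))%:E
       - \sum_(1 <= t < T.+1) (eta t)^-1%:E * kl (v t) (wt t))%E) /\
  (* (ii) *)
  (forall theta : nat -> R,
    0 < theta 1%N -> (forall t, (1 <= t < T)%N -> theta t <= theta t.+1) ->
    let wt := omd_tilde a theta l in
    let w := fun t => expstep (wt t) (theta t) (lh t) in
    let v := fun t => expstep (wt t) (theta t) (lhat' (l t) (lh t)) in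
    (forall t, (1 <= t <= T)%N -> subgrad (phi t) (w t) (l t)) ->
    (regret T phi w u <=
       (theta 1%N)^-1%:E * kl u a
       + \sum_(1 <= t < T.+1)
           ((theta t)^-1 * Qstar 2 (theta t * supnorm (vsub (l t) (lh t))))%:E
       - \sum_(1 <= t < T.+1) (theta t)^-1%:E * kl (w t) (wt t))%E /\
    (regret T phi w u <=
       (theta 1%N)^-1%:E * kl u a
       + \sum_(1 <= t < T.+1) ((theta t)^-1 * Phix (theta t) (l t) (lh t))%:E
       - \sum_(1 <= t < T.+1) (theta t)^-1%:E * kl (v t) (wt t))%E).
Proof.
move=> _ subgrad_simplex sa su.
have hu t tT : exists g, subgrad (phi t) u g := subgrad_simplex t tT u su.
split=> [eta eta_nonincr eta_gt0 wt | th th_gt0 th_nondecr wt].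
- apply: expweights_regret_le => //.
  + by move=> t; exact: (expstep_simplex (eta t) (cumloss l t) sa).
  + by move=> t /andP[t1 tT]; apply: nonincr_gt0 eta_nonincr eta_gt0 _ _; rewrite t1 ltnW.
  + by rewrite invr_gt0.
  + exact: ftrl_mix_loss_le sa su eta_nonincr eta_gt0.
- apply: expweights_regret_le => //.
  + by move=> t; exact: omd_tilde_simplex.
  + exact: nondecr_gt0 th_gt0 th_nondecr.
  + by rewrite invr_gt0.
  + exact: omd_mix_loss_le sa su th_gt0 th_nondecr.
Qed.
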